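(* Let $d\ge 3$ and $h\ge 1$ be integers, and let $G(d,h)$ be the sandpile group of the $d$-valent tree of depth $h$. Then the rank of $G(d,h)$ (the minimal number of generators of this finite abelian group) is $(d-1)^h$.
   Context: Let $\mathcal{T}(d,h)$ be the ball of radius $h$ about a fixed vertex $0$ (the root) in the infinite $d$-regular tree, i.e. the rooted tree in which the root has $d$ children, every vertex at distance $1,\dots,h-1$ from the root has $d-1$ children, and the vertices at distance $h$ (the leaves) have no children. Let $V$ be its vertex set and $A$ its adjacency matrix. Let $\Delta := dI - A$, let $\delta_i\in\mathbb{Z}^V$ ($i\in V$) be the rows of $\Delta$, and let $\Lambda\subset\mathbb{Z}^V$ be the lattice they span. The sandpile group is $G(d,h) := \mathbb{Z}^V/\Lambda$ (a finite abelian group). *)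

From HB Require Import structures.
From mathcomp Require Import all_boot all_order all_algebra.
Set Implicit Arguments. Unset Strict Implicit. Unset Printing Implicit Defensive.
Import Order.TTheory GRing.Theory Num.Theory.
Local Open Scope ring_scope.

(* A vertex of the ball T(d,h) is the word (path from the root) of length
   k <= h: its first letter is in {0..d-1} (the d children of the root),
   subsequent letters are in {0..d-2} (the d-1 children of a non-root vertex). *)
Definition word (d h : nat) := {k : 'I_h.+1 & k.-tuple 'I_d}.

Definition wseq d h (w : word d h) : seq 'I_d := val (tagged w).

Definition valid_word d h (w : word d h) : bool :=
  all (fun x : 'I_d => (x < d.-1)%N) (behead (wseq w)).

Definition vertex (d h : nat) := {w : word d h | valid_word w}.

Definition vseq d h (v : vertex d h) : seq 'I_d := wseq (val v).

Definition is_child d h (u v : vertex d h) : bool :=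
  (size (vseq v) == (size (vseq u)).+1) && (take (size (vseq u)) (vseq v) == vseq u).

Definition adj d h (u v : vertex d h) : bool := is_child u v || is_child v u.

Definition delta d h (u : vertex d h) : vertex d h -> int :=
  fun v => (d%:Z * (u == v)%:Z - (adj u v)%:Z)%R.

(* G(d,h) = Z^V / Lambda is generated by r elements: there are g_1..g_r in Z^V
   such that every x in Z^V is congruent mod Lambda to an integer combination
   of the g_i. *)
Definition sandpile_generated_by d h (r : nat) : Prop :=
  exists g : 'I_r -> vertex d h -> int,
    forall x : vertex d h -> int,
      exists (c : 'I_r -> int) (l : vertex d h -> int),
        forall j : vertex d h,
          x j = \sum_(i < r) c i * g i j + \sum_(u : vertex d h) l u * delta u j.

Definition sandpile_rank_is d h (n : nat) : Prop :=
  sandpile_generated_by d h n /\ forall r, sandpile_generated_by d h r -> (n <= r)%N.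

(* Call a vertex a generator if its depth has the parity of h and it is either
   the root or its last letter is nonzero; there are (d-1)^h of them.
   Upper bound: since d e_u = delta_u + sum_{j ~ u} e_j, the unit vector of a
   neighbour y of u is determined modulo the lattice by e_u and the e_j, j ~ u,
   j <> y.  Vertices of the wrong parity are reached from their child ending in
   1 (here d >= 3 is used) by induction on the height, and then the remaining
   vertices of the right parity, which end in 0, from their parent by induction
   on the depth.
   Lower bound: modulo a prime p dividing d, delta_u = -(A e_u).  For a
   generator x, the signed indicator of the descendants x a_1 0 ... a_k 0 of x
   (sign (-1)^k), minus the same function for the sibling of x ending in 0, is
   annihilated by A and takes the value [x = y] at every generator y.  These
   functionals map G(d,h) onto F_p^(generators). *)

From mathcomp Require Import all_boot all_order all_algebra zify ring.
Set Implicit Arguments. Unset Strict Implicit.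
Unset Printing Implicit Defensive.
Import Order.TTheory GRing.Theory Num.Theory.

Section SpanModulo.
Local Open Scope ring_scope.
Variables (V : finType) (L : V -> V -> int).

Definition unitv (v : V) : V -> int := fun j => (v == j)%:Z.

Lemma sum_unitv (f : V -> int) (v : V) : \sum_j f j * unitv v j = f v.
Proof.
rewrite (bigD1 v) //= /unitv eqxx mulr1 big1 ?addr0 // => j.
by rewrite eq_sym => /negbTE ->; rewrite mulr0.
Qed.

Definition in_span_mod r (g : 'I_r -> V -> int) (x : V -> int) : Prop :=
  exists (c : 'I_r -> int) (l : V -> int),
    forall j, x j = \sum_(i < r) c i * g i j + \sum_(u : V) l u * L u j.

Section Closure.
Variables (r : nat) (g : 'I_r -> V -> int).

Lemma eq_in_span_mod (x y : V -> int) : x =1 y -> in_span_mod g x -> in_span_mod g y.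
Proof. by move=> Exy [c [l H]]; exists c, l => j; rewrite -Exy. Qed.

Lemma in_span_mod0 : in_span_mod g (fun _ => 0).
Proof.
exists (fun _ => 0), (fun _ => 0) => j.
by rewrite !big1 ?addr0 // => *; rewrite mul0r.
Qed.

Lemma in_span_modD (x y : V -> int) :
  in_span_mod g x -> in_span_mod g y -> in_span_mod g (fun j => x j + y j).
Proof.
move=> [c1 [l1 H1]] [c2 [l2 H2]].
exists (fun i => c1 i + c2 i), (fun u => l1 u + l2 u) => j.
under [in RHS]eq_bigr do rewrite mulrDl.
under [X in _ = _ + X]eq_bigr do rewrite mulrDl.
by rewrite H1 H2 !big_split /=; ring.
Qed.

Lemma in_span_modZ (a : int) (x : V -> int) :
  in_span_mod g x -> in_span_mod g (fun j => a * x j).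
Proof.
move=> [c [l H]]; exists (fun i => a * c i), (fun u => a * l u) => j.
rewrite H mulrDr !big_distrr /=.
by congr (_ + _); apply: eq_bigr => i _; rewrite mulrA.
Qed.

Lemma in_span_mod_sum (I : Type) (s : seq I) (P : pred I) (f : I -> V -> int) :
  (forall i, P i -> in_span_mod g (f i)) ->
  in_span_mod g (fun j => \sum_(i <- s | P i) f i j).
Proof.
move=> Pf; elim: s => [|a s IHs].
  by apply: eq_in_span_mod in_span_mod0 => j; rewrite big_nil.
case Pa: (P a); last by apply: eq_in_span_mod IHs => j; rewrite big_cons Pa.
by apply: eq_in_span_mod (in_span_modD (Pf a Pa) IHs) => j; rewrite big_cons Pa.
Qed.

Lemma in_span_mod_gen (i : 'I_r) : in_span_mod g (g i).
Proof.
exists (fun i' => (i' == i)%:Z), (fun _ => 0) => j.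
rewrite [X in _ = _ + X]big1 ?addr0 => [|u _]; last by rewrite mul0r.
rewrite (bigD1 i) //= eqxx mul1r big1 ?addr0 // => i' /negbTE ->.
by rewrite mul0r.
Qed.

Lemma in_span_mod_row (u : V) : in_span_mod g (L u).
Proof.
exists (fun _ => 0), (fun w => (w == u)%:Z) => j.
rewrite big1 ?add0r => [|i _]; last by rewrite mul0r.
rewrite (bigD1 u) //= eqxx mul1r big1 ?addr0 // => w /negbTE ->.
by rewrite mul0r.
Qed.

Lemma in_span_mod_all : (forall v, in_span_mod g (unitv v)) -> forall x, in_span_mod g x.
Proof.
move=> gen_unitv x.
have := @in_span_mod_sum _ (index_enum V) predT (fun v j => x v * unitv v j)
  (fun v _ => in_span_modZ (x v) (gen_unitv v)).
apply: eq_in_span_mod => j /=.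
rewrite -[RHS](sum_unitv x j); apply: eq_bigr => v _.
by rewrite /unitv eq_sym.
Qed.

Lemma pairing_in_span_mod (w : V -> int) (c : 'I_r -> int) (l : V -> int) (x : V -> int) :
  (forall j, x j = \sum_(i < r) c i * g i j + \sum_(u : V) l u * L u j) ->
  \sum_j w j * x j =
    \sum_(i < r) c i * (\sum_j w j * g i j) + \sum_u l u * (\sum_j w j * L u j).
Proof.
move=> Ex; under eq_bigr do rewrite Ex mulrDr !big_distrr /=.
rewrite big_split /= [X in X + _]exchange_big [X in _ + X]exchange_big /=.
by congr (_ + _); apply: eq_bigr => i _; rewrite big_distrr; apply: eq_bigr => j _;
  rewrite mulrCA.
Qed.

(* Over [F] the functionals [w k] vanish on the lattice, so pairing them with
   the [unitv (e l)] shows that the coefficient matrix of the [unitv (e l)] on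
   [g] has a right inverse. *)
Lemma in_span_mod_rank_lower (F : fieldType) n (w : 'I_n -> V -> int) (e : 'I_n -> V) :
  (forall k u, (\sum_j w k j * L u j)%:~R = 0 :> F) ->
  (forall k l, w k (e l) = (k == l)%:Z) ->
  (forall l, in_span_mod g (unitv (e l))) -> (n <= r)%N.
Proof.
move=> w_rows w_dual span_e.
have [c span_c] := fin_all_exists span_e.
have [lam Ec] := fin_all_exists span_c.
pose C : 'M[F]_(n, r) := \matrix_(l, i) (c l i)%:~R.
pose Phi : 'M[F]_(r, n) := \matrix_(i, k) (\sum_j w k j * g i j)%:~R.
have CPhi : C *m Phi = 1%:M.
  apply/matrixP => l k; rewrite !mxE.
  have := @pairing_in_span_mod (w k) _ _ _ (Ec l).
  rewrite sum_unitv w_dual eq_sym => /(congr1 (fun z : int => z%:~R : F)) /= Elk.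
  rewrite [RHS](_ : _ = ((l == k)%:Z)%:~R) // Elk intrD !rmorph_sum /=.
  rewrite [X in _ + X]big1 ?addr0 => [|u _]; last by rewrite intrM w_rows mulr0.
  by apply: eq_bigr => i _; rewrite !mxE intrM.
have := mxrankM_maxr C Phi; rewrite CPhi mxrank1 => /leq_trans; apply.
exact: rank_leq_row.
Qed.

Section Laplacian.
Variables (D : int) (a : rel V).
Hypothesis L_laplacian : forall u v, L u v = D * (u == v)%:Z - (a u v)%:Z.

Lemma in_span_mod_unitv_nbr (u y : V) : a u y ->
  in_span_mod g (unitv u) ->
  (forall j, a u j -> j != y -> in_span_mod g (unitv j)) ->
  in_span_mod g (unitv y).
Proof.
move=> auy span_u span_nbr.
(* [unitv y = D * unitv u - L u - \sum_(j | a u j && j != y) unitv j] *)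
have span_rest : in_span_mod g (fun k => \sum_(j | a u j && (j != y)) unitv j k).
  by apply: in_span_mod_sum => j /andP[]; exact: span_nbr.
have nbr_sum k : \sum_(j | a u j && (j != y)) unitv j k = (a u k)%:Z - unitv y k.
  have -> : (a u k)%:Z = \sum_(j | a u j) unitv j k.
    rewrite big_mkcond -(sum_unitv (fun j => (a u j)%:Z) k) /=.
    by apply: eq_bigr => j _; rewrite /unitv eq_sym; case: (a u j); rewrite ?mul1r ?mul0r.
  by rewrite [in RHS](bigD1 y) //= addrAC subrr add0r.
have := in_span_modD (in_span_modZ D span_u)
  (in_span_modZ (-1) (in_span_modD (in_span_mod_row u) span_rest)).
apply: eq_in_span_mod => k; rewrite nbr_sum L_laplacian /unitv; ring.
Qed.
End Laplacian.
End Closure.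
End SpanModulo.

Section TreeWords.
Variables d h : nat.
Local Notation vertex := (vertex d h).

Definition letter_bound (t : nat) : nat := if t == 0 then d else d.-1.

Definition is_word (s : seq nat) : bool :=
  [&& size s <= h, all (fun a => a < d) (take 1 s) & all (fun a => a < d.-1) (behead s)].

Lemma is_word_rcons s a :
  is_word (rcons s a) = [&& is_word s, size s < h & a < letter_bound (size s)].
Proof.
rewrite /is_word /letter_bound size_rcons; case: s => [|b s] /=; first by rewrite !andbT.
rewrite !take0 -cats1 all_cat /=.
by case: (b < d) (all _ s) (a < d.-1) => [] [] []; rewrite ?andbF //=; lia.
Qed.

Lemma is_word_take s k : is_word s -> is_word (take k s).
Proof.
case/and3P=> size_s take_s behead_s; apply/and3P; split.
- by rewrite size_take; case: ifP => // /ltnW/leq_trans; apply.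
- by case: k => [|k]; rewrite ?take0 ?take_takel.
- case: s behead_s {size_s take_s} => [|a s] //=.
  by case: k => [|k] //= /allP all_s; apply/allP => b /mem_take; exact: all_s.
Qed.

Definition vword (v : vertex) : seq nat := map val (vseq v).

Lemma vword_inj : injective vword.
Proof.
case=> [[k t] vt] [[k' t'] vt']; rewrite /vword /vseq /wseq /= => /(inj_map val_inj) Ett'.
have Ekk' : k = k' by apply: val_inj; rewrite /= -(size_tuple t) -(size_tuple t') Ett'.
subst k'; have Ett : t = t' by apply: val_inj.
by subst t'; rewrite (bool_irrelevance vt vt').
Qed.

Lemma vword_is_word v : is_word (vword v).
Proof.
case: v => [[k t] vt]; rewrite /is_word /vword /vseq /wseq /=.
rewrite size_map size_tuple -ltnS ltn_ord -map_take all_map behead_map all_map /=.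
by apply/andP; split; [apply/allP => x _ /= | exact: vt].
Qed.

Lemma vword_size v : size (vword v) <= h.
Proof. by case/and3P: (vword_is_word v). Qed.

Lemma is_word_vword s : is_word s -> exists v, vword v = s.
Proof.
move=> word_s; have s_lt_d : all (fun a => a < d) s.
  case: s word_s => [|a s] //= /and3P[_ /andP[-> _]].
  by apply: sub_all => b /leq_trans; apply; exact: leq_pred.
have Et : map val (pmap (insub : nat -> option 'I_d) s) = s.
  by elim: s s_lt_d {word_s} => //= a s IHs /andP[a_lt /IHs]; rewrite insubT /= => ->.
set t := pmap _ s in Et.
have size_t : size t < h.+1 by rewrite -(size_map val) Et ltnS; case/and3P: word_s.
pose w : word d h := existT _ (Ordinal size_t) (Tuple (eqxx (size t))).
have valid_w : valid_word w.
  by case/and3P: word_s => _ _; rewrite -Et behead_map all_map.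
by exists (exist _ w valid_w).
Qed.

Definition root_vertex : vertex := exist _ (existT _ ord0 [tuple]) (erefl true).

Definition vertex_of (s : seq nat) : vertex := odflt root_vertex [pick v | vword v == s].

Lemma vertex_ofK s : is_word s -> vword (vertex_of s) = s.
Proof.
move=> /is_word_vword[v Ev]; rewrite /vertex_of; case: pickP => [w /eqP //|/(_ v)].
by rewrite Ev eqxx.
Qed.

Definition parent_word (s : seq nat) := take (size s).-1 s.

Lemma parent_word_rcons s a : parent_word (rcons s a) = s.
Proof. by rewrite /parent_word size_rcons -cats1 take_size_cat. Qed.

Lemma rcons_parent_word s : s != [::] -> rcons (parent_word s) (last 0 s) = s.
Proof. by case/lastP: s => // s a _; rewrite parent_word_rcons last_rcons. Qed.

Lemma size_parent_word s : size (parent_word s) = (size s).-1.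
Proof. by rewrite size_take; case: (size s) => //= n; rewrite ltnSn. Qed.

Lemma is_childE u v : is_child u v = (vword v == rcons (vword u) (last 0 (vword v))).
Proof.
rewrite /is_child -[size (vseq v)](size_map val) -[size (vseq u)](size_map val).
rewrite -(inj_eq (inj_map val_inj)) map_take -/(vword u) -/(vword v).
apply/andP/eqP => [[/eqP size_v /eqP take_v]|->].
  have parent_v : parent_word (vword v) = vword u by rewrite /parent_word size_v.
  by rewrite -parent_v rcons_parent_word // -size_eq0 size_v.
by rewrite size_rcons -cats1 take_size_cat.
Qed.

Lemma is_child_rcons u v a : vword v = rcons (vword u) a -> is_child u v.
Proof. by move=> Ev; rewrite is_childE Ev last_rcons. Qed.

Lemma is_child_parent_word u v : is_child u v -> parent_word (vword v) = vword u.
Proof. by rewrite is_childE => /eqP ->; rewrite parent_word_rcons. Qed.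

Local Open Scope ring_scope.

Lemma adj_children (u v : vertex) : (adj u v)%:Z = (is_child u v)%:Z + (is_child v u)%:Z.
Proof.
rewrite /adj; case uv: (is_child u v); case vu: (is_child v u) => //.
move: uv vu; rewrite !is_childE => /eqP/(congr1 size) + /eqP/(congr1 size).
by rewrite !size_rcons; lia.
Qed.

Lemma sum_parent (f : seq nat -> int) u :
  \sum_j f (vword j) * (is_child j u)%:Z =
  if vword u == [::] then 0 else f (parent_word (vword u)).
Proof.
case: eqP => [u_root|/eqP u_nonroot].
  by apply: big1 => j _; rewrite is_childE u_root; case: (vword j) => [|? ?]; rewrite mulr0.
pose p := vertex_of (parent_word (vword u)).
have Ep : vword p = parent_word (vword u) by apply/vertex_ofK/is_word_take/vword_is_word.
have p_u : is_child p u.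
  by apply: (is_child_rcons (a := last 0 (vword u))); rewrite Ep rcons_parent_word.
rewrite (bigD1 p) //= p_u mulr1 Ep big1 ?addr0 // => j /negbTE j_p.
case j_u: (is_child j u); rewrite ?mulr0 //.
by move: j_p; rewrite -(inj_eq vword_inj) Ep -(is_child_parent_word j_u) eqxx.
Qed.

Lemma sum_children_single (f : seq nat -> int) u a0 (K : int) :
  (forall a, f (rcons (vword u) a) = if a == a0 then K else 0) ->
  \sum_j f (vword j) * (is_child u j)%:Z = if is_word (rcons (vword u) a0) then K else 0.
Proof.
move=> Ef.
have child_term j : is_child u j -> f (vword j) = if last 0 (vword j) == a0 then K else 0.
  by rewrite is_childE => /eqP Ej; rewrite Ej Ef last_rcons.
case: ifP => [word_ua0|not_word].
  pose j0 := vertex_of (rcons (vword u) a0).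
  have Ej0 : vword j0 = rcons (vword u) a0 by exact: vertex_ofK.
  rewrite (bigD1 j0) ?(is_child_rcons Ej0) //= Ej0 Ef eqxx mulr1 big1 ?addr0 // => j j_j0.
  case u_j: (is_child u j); rewrite ?mulr0 // child_term //.
  case: eqP => [Ea0|]; last by rewrite mul0r.
  by move: j_j0; rewrite -(inj_eq vword_inj) Ej0; move: u_j; rewrite is_childE Ea0 => ->.
apply: big1 => j _; case u_j: (is_child u j); rewrite ?mulr0 // child_term //.
case: eqP => [Ea0|]; last by rewrite mul0r.
by move: (vword_is_word j) u_j; rewrite is_childE => + /eqP Ej; rewrite Ej Ea0 not_word.
Qed.

End TreeWords.

Lemma seq_ind2 (T : Type) (P : seq T -> Prop) :
  P [::] -> (forall a, P [:: a]) -> (forall a b s, P s -> P [:: a, b & s]) ->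
  forall s, P s.
Proof.
move=> P0 P1 P2 s; have [n] := ubnP (size s).
elim: n s => // n IHn [|a [|b s]] //= lt_s; apply/P2/IHn; lia.
Qed.

Section AlternatingSign.
Local Open Scope ring_scope.

Fixpoint alt_sign (s : seq nat) : int :=
  match s with
  | [::] => 1
  | [:: _] => 0
  | _ :: b :: s' => if b == 0%N then - alt_sign s' else 0
  end.

Lemma alt_sign_odd s : odd (size s) -> alt_sign s = 0.
Proof. by elim/seq_ind2: s => //= a b s IHs /negbNE/IHs ->; rewrite oppr0 if_same. Qed.

Lemma alt_sign_cat s t : ~~ odd (size s) -> alt_sign (s ++ t) = alt_sign s * alt_sign t.
Proof.
elim/seq_ind2: s => [|a|a b s IHs] /=; rewrite ?mul1r // negbK => /IHs ->.
by case: eqP; rewrite ?mulNr ?mul0r.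
Qed.

Lemma alt_sign_rcons2 s b a :
  alt_sign (rcons (rcons s b) a) = if a == 0%N then - alt_sign s else 0.
Proof.
have [odd_s|even_s] := boolP (odd (size s)).
  by rewrite !alt_sign_odd ?oppr0 ?if_same // !size_rcons /= negbK.
by rewrite -!cats1 -catA alt_sign_cat //=; case: eqP; rewrite ?mulrN1 ?mulr0.
Qed.

Lemma alt_sign_last s : alt_sign s != 0 -> s != [::] -> last 0%N s = 0%N.
Proof.
elim/seq_ind2: s => [|a|a b s IHs] //=; rewrite ?eqxx //.
case: (b =P 0%N) => [-> | _]; last by rewrite eqxx.
by rewrite oppr_eq0 => /IHs {IHs}; case: s => // c s /(_ isT).
Qed.

Definition desc_sign (x y : seq nat) : int :=
  if prefix x y then alt_sign (drop (size x) y) else 0.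

Lemma desc_sign_cat x s : desc_sign x (x ++ s) = alt_sign s.
Proof. by rewrite /desc_sign prefix_prefix drop_size_cat. Qed.

Lemma desc_sign_nprefix x y : ~~ prefix x y -> desc_sign x y = 0.
Proof. by rewrite /desc_sign => /negbTE ->. Qed.

Definition nonzero_tip (s : seq nat) : bool := (s == [::]) || (last 0%N s != 0%N).

Lemma desc_sign_tip x y : nonzero_tip y -> desc_sign x y = (x == y)%:Z.
Proof.
rewrite /desc_sign; case: ifP => [/prefixP[s ->]|x_y _]; last first.
  by case: eqP x_y => // ->; rewrite prefix_refl.
rewrite drop_size_cat //; case: s => [|a s]; first by rewrite cats0 eqxx.
have -> : (x == x ++ a :: s) = false.
  by apply/negbTE/eqP => /(congr1 size); rewrite size_cat /=; lia.
move=> tip_y; apply/eqP; apply: contraT => /alt_sign_last/(_ isT) /= last0.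
by move: tip_y; rewrite /nonzero_tip last_cat /= last0 eqxx orbF; case: (x).
Qed.

End AlternatingSign.

Lemma prefix_rcons_eq (T : eqType) (x s : seq T) a :
  prefix x (rcons s a) -> ~~ prefix x s -> x = rcons s a.
Proof.
move=> /prefixP[t]; case/lastP: t => [|t b]; first by rewrite cats0.
by rewrite -rcons_cat => /rcons_inj[-> _]; rewrite prefix_prefix.
Qed.

Section HarmonicDuals.
Variables d h : nat.
Hypothesis d_gt1 : (1 < d)%N.
Local Notation vertex := (vertex d h).
Local Notation is_word := (is_word d h).
Local Notation vword := (@vword d h).
Local Open Scope ring_scope.

Lemma is_word_rcons0 s : is_word s -> is_word (rcons s 0%N) = (size s < h)%N.
Proof. by move=> word_s; rewrite is_word_rcons word_s /letter_bound; case: eqP; lia. Qed.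

Lemma sum_adj_desc_sign_prefix (x : seq nat) (u : vertex) : odd (size x) = odd h ->
  prefix x (vword u) -> \sum_j desc_sign x (vword j) * (adj u j)%:Z = 0.
Proof.
move=> odd_x /prefixP[s Eu].
under eq_bigr do rewrite adj_children mulrDr.
rewrite big_split /= sum_parent.
case/lastP: s Eu => [|s c]; rewrite ?cats0 => Eu.
  have children_u a : desc_sign x (rcons (vword u) a) = if a == 0%N then 0 else 0.
    by rewrite Eu -cats1 desc_sign_cat if_same.
  rewrite (sum_children_single children_u) if_same add0r; case: eqP => // /eqP u_nonroot.
  apply/desc_sign_nprefix/negP => /size_prefix; rewrite size_parent_word Eu.
  by move: u_nonroot; rewrite Eu -size_eq0; case: (size x) => // n _; rewrite ltnn.
have children_u a :
    desc_sign x (rcons (vword u) a) = if a == 0%N then - alt_sign s else 0.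
  by rewrite Eu rcons_cat desc_sign_cat alt_sign_rcons2.
have u_nonroot : (vword u == [::]) = false.
  by rewrite Eu -size_eq0 size_cat size_rcons addnS.
rewrite (sum_children_single children_u) is_word_rcons0 ?vword_is_word // u_nonroot.
rewrite Eu -rcons_cat parent_word_rcons desc_sign_cat.
case: ltnP => [_|]; first by rewrite addNr.
have := vword_size u; rewrite Eu -rcons_cat size_rcons size_cat => le_h ge_h.
rewrite alt_sign_odd ?oppr0 ?add0r //.
have Eh : h = ((size x + size s).+1)%N by apply/eqP; rewrite eqn_leq le_h ge_h.
by move: odd_x; rewrite Eh /= oddD; case: (odd (size x)); case: (odd (size s)).
Qed.

Lemma sum_adj_desc_sign_nprefix (x : seq nat) (u : vertex) : is_word x ->
  ~~ prefix x (vword u) ->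
  \sum_j desc_sign x (vword j) * (adj u j)%:Z = (x == rcons (vword u) (last 0%N x))%:Z.
Proof.
move=> word_x x_u.
under eq_bigr do rewrite adj_children mulrDr.
rewrite big_split /= sum_parent.
have -> : (if vword u == [::] then 0 else desc_sign x (parent_word (vword u))) = 0.
  case: ifP => // _; apply/desc_sign_nprefix; apply: contra x_u => /prefix_trans; apply.
  exact: prefix_take.
have children_u a : desc_sign x (rcons (vword u) a) =
    if a == last 0%N x then (x == rcons (vword u) (last 0%N x))%:Z else 0.
  have [x_ua|x_ua] := boolP (prefix x (rcons (vword u) a)).
    have Ex := prefix_rcons_eq x_ua x_u.
    by rewrite Ex last_rcons !eqxx /desc_sign prefix_refl drop_size.
  rewrite desc_sign_nprefix //; case: eqP => // Ea.
  by case: eqP => // Ex; rewrite Ex -Ea prefix_refl in x_ua.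
rewrite (sum_children_single children_u) addr0.
by have [<-|_] := eqVneq x (rcons (vword u) (last 0%N x)); rewrite ?word_x ?if_same.
Qed.

Lemma sum_adj_desc_sign (x : seq nat) (u : vertex) : is_word x -> odd (size x) = odd h ->
  \sum_j desc_sign x (vword j) * (adj u j)%:Z =
  ((x != [::]) && (vword u == parent_word x))%:Z.
Proof.
move=> word_x odd_x; have [x_u|x_u] := boolP (prefix x (vword u)).
  rewrite sum_adj_desc_sign_prefix //.
  have [Eu|] := eqVneq (vword u) (parent_word x); last by rewrite andbF.
  move: x_u; rewrite Eu => /size_prefix; rewrite size_parent_word.
  by case: (x) => //= a s; rewrite ltnn.
rewrite sum_adj_desc_sign_nprefix //; congr (Posz (nat_of_bool _)).
apply/idP/idP => [/eqP ->|/andP[x_nil /eqP ->]]; last by rewrite rcons_parent_word.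
by rewrite parent_word_rcons eqxx andbT; case: (vword u).
Qed.

Definition sibling0 (x : seq nat) := rcons (parent_word x) 0%N.

Definition harm (x y : seq nat) : int :=
  desc_sign x y - (if x == [::] then 0 else desc_sign (sibling0 x) y).

Lemma sum_adj_harm (x : seq nat) (u : vertex) : is_word x -> odd (size x) = odd h ->
  \sum_j harm x (vword j) * (adj u j)%:Z = 0.
Proof.
move=> word_x odd_x; under eq_bigr do rewrite mulrBl.
rewrite sumrB sum_adj_desc_sign //; case: eqP => [->|/eqP x_nil] /=.
  by rewrite big1 ?subr0 // => j _; rewrite mul0r.
have size_x : size x = (size (parent_word x)).+1 by rewrite size_parent_word; case: (x) x_nil.
have word_sib : is_word (sibling0 x).
  rewrite is_word_rcons0 ?is_word_take // -ltnS -size_x.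
  by case/and3P: word_x.
rewrite sum_adj_desc_sign // /sibling0 ?size_rcons -?size_x // parent_word_rcons.
by case: (parent_word x) => [|? ?]; rewrite subrr.
Qed.

Lemma harm_tip (x y : seq nat) : nonzero_tip y -> harm x y = (x == y)%:Z.
Proof.
move=> tip_y; rewrite /harm !desc_sign_tip //; case: (x =P [::]) => _; rewrite ?subr0 //.
have [Ey|] := eqVneq (sibling0 x) y; last by rewrite subr0.
by move: tip_y; rewrite -Ey /nonzero_tip /sibling0 last_rcons; case: (parent_word x).
Qed.

Lemma sum_harm_delta (x : seq nat) (u : vertex) : is_word x -> odd (size x) = odd h ->
  \sum_j harm x (vword j) * delta u j = d%:Z * harm x (vword u).
Proof.
move=> word_x odd_x; rewrite -(sum_unitv (fun j => harm x (vword j)) u).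
under eq_bigr do rewrite /delta mulrBr mulrCA.
by rewrite sumrB -big_distrr sum_adj_harm // subr0; under eq_bigr do rewrite /unitv eq_sym.
Qed.

Definition gen_vertex (v : vertex) : bool :=
  (odd (size (vword v)) == odd h) && nonzero_tip (vword v).

Lemma card_gen_vertex_le r :
  sandpile_generated_by d h r -> (#|[set v | gen_vertex v]| <= r)%N.
Proof.
move=> [g span_g]; pose p := pdiv d.
have d_eq0 : (d%:R : 'F_p) = 0.
  by apply/eqP; rewrite -(dvdn_pcharf (pchar_Fp (pdiv_prime d_gt1))); exact: pdiv_dvd.
pose e (k : 'I_#|[set v | gen_vertex v]|) := enum_val k.
have gen_e k : gen_vertex (e k) by have := enum_valP k; rewrite inE.
apply: (@in_span_mod_rank_lower _ (@delta d h) _ g 'F_p _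
          (fun k j => harm (vword (e k)) (vword j)) e) => [k u|k l|l]; last exact: span_g.
  case/andP: (gen_e k) => /eqP odd_k _.
  rewrite sum_harm_delta ?vword_is_word // intrM.
  by rewrite -[(d%:Z)%:~R : 'F_p]/(d%:R : 'F_p) d_eq0 mul0r.
case/andP: (gen_e l) => _ /harm_tip ->.
by rewrite (inj_eq (@vword_inj d h)) (inj_eq enum_val_inj).
Qed.

End HarmonicDuals.

Section GeneratorsSpan.
Variables (d h r : nat) (g : 'I_r -> vertex d h -> int).
Hypothesis d_gt2 : (2 < d)%N.
Hypothesis span_gen : forall v, gen_vertex v -> in_span_mod (@delta d h) g (unitv v).
Local Notation span := (in_span_mod (@delta d h) g).
Local Notation vword := (@vword d h).
Local Open Scope ring_scope.

Lemma span_unitv_nbr (u y : vertex d h) : adj u y -> span (unitv u) ->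
  (forall j, adj u j -> j != y -> span (unitv j)) -> span (unitv y).
Proof. exact: (in_span_mod_unitv_nbr (D := d%:Z)). Qed.

Lemma span_unitv_offparity q : odd (size (vword q)) != odd h -> span (unitv q).
Proof.
have [n] := ubnP (h - size (vword q))%N; elim: n q => // n IHn q lt_q odd_q.
have size_q : (size (vword q) < h)%N.
  by rewrite ltn_neqAle vword_size andbT; apply: contra odd_q => /eqP ->.
have [v Ev] : exists v, vword v = rcons (vword q) 1%N.
  apply/is_word_vword; rewrite is_word_rcons vword_is_word size_q /letter_bound.
  by case: eqP; lia.
apply: (span_unitv_nbr (u := v)); first by rewrite /adj (is_child_rcons Ev) orbT.
  apply: span_gen; rewrite /gen_vertex /nonzero_tip Ev size_rcons last_rcons /= orbT andbT.
  by move: odd_q; case: (odd _); case: (odd h).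
move=> j /orP[v_j|j_v] j_q.
  move: v_j; rewrite is_childE Ev => /eqP Ej.
  by apply: IHn; rewrite Ej ?size_rcons /= ?negbK //; lia.
by case/eqP: j_q; apply: vword_inj; rewrite -(is_child_parent_word j_v) Ev parent_word_rcons.
Qed.

Lemma span_unitv_onparity y : odd (size (vword y)) = odd h -> span (unitv y).
Proof.
have [n] := ubnP (size (vword y)); elim: n y => // n IHn y lt_y odd_y.
have [gen_y|] := boolP (gen_vertex y); first exact: span_gen.
rewrite /gen_vertex odd_y eqxx /nonzero_tip negb_or negbK => /andP[y_nonroot /eqP last_y].
have [q Eq] := is_word_vword (is_word_take ((size (vword y)).-1) (vword_is_word y)).
have Ey : vword y = rcons (vword q) 0%N by rewrite Eq -last_y rcons_parent_word.
apply: (span_unitv_nbr (u := q)); first by rewrite /adj (is_child_rcons Ey).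
  by apply: span_unitv_offparity; rewrite -odd_y Ey size_rcons /=; case: (odd _).
move=> j /orP[q_j|j_q] j_y.
  apply: span_gen; move: q_j; rewrite is_childE => /eqP Ej.
  rewrite /gen_vertex /nonzero_tip Ej size_rcons last_rcons -odd_y Ey size_rcons eqxx /=.
  apply/orP; right; move: j_y; apply: contraNN => /eqP last_j.
  by apply/eqP/vword_inj; rewrite Ej Ey last_j.
have Eq' : vword q = rcons (vword j) (last 0%N (vword q)) by apply/eqP; rewrite -is_childE.
apply: IHn; move: lt_y odd_y; rewrite Ey Eq' !size_rcons //=; first by lia.
by rewrite negbK.
Qed.

Lemma span_unitv v : span (unitv v).
Proof.
have [odd_v|odd_v] := eqVneq (odd (size (vword v))) (odd h).
  exact: span_unitv_onparity.
exact: span_unitv_offparity.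
Qed.

End GeneratorsSpan.

Lemma gen_vertex_generate d h : (2 < d)%N ->
  sandpile_generated_by d h #|[set v | @gen_vertex d h v]|.
Proof.
move=> d_gt2; exists (fun k => unitv (enum_val k)); apply: in_span_mod_all => v.
apply: span_unitv => // w gen_w; have w_in : w \in [set v | gen_vertex v] by rewrite inE.
have := in_span_mod_gen (@delta d h) (fun k => unitv (enum_val k)) (enum_rank_in w_in w).
by rewrite enum_rankK_in.
Qed.

Lemma card_ord_range n lo m : (m <= n)%N -> #|[set a : 'I_n | (lo <= a < m)%N]| = (m - lo)%N.
Proof.
move=> le_m_n; rewrite -[(m - lo)%N]muln1 -sum_nat_const_nat.
rewrite (@big_nat_widenl _ _ _ lo 0) // (@big_nat_widen _ _ _ 0 m n) // big_mkord.
by rewrite -sum1_card; apply: eq_bigl => a; rewrite inE.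
Qed.

Section Counting.
Variables d h : nat.
Hypothesis d_gt1 : (1 < d)%N.
Local Notation vertex := (vertex d h).
Local Notation vword := (@vword d h).

Definition level t := [set v : vertex | size (vword v) == t].

Lemma card_level0 : #|level 0| = 1.
Proof.
rewrite -(cards1 (root_vertex d h)); apply: eq_card => v; rewrite !inE size_eq0.
by apply/eqP/eqP => [v_nil|->] //; apply: vword_inj; rewrite v_nil.
Qed.

Lemma card_level_succ_ge lo t : t < h ->
  #|[set v : vertex | (size (vword v) == t.+1) && (lo <= last 0 (vword v))]| =
  #|level t| * (letter_bound d t - lo).
Proof.
move=> lt_t_h; have le_bound_d : letter_bound d t <= d.
  by rewrite /letter_bound; case: eqP => // _; exact: leq_pred.
rewrite -(card_ord_range lo le_bound_d) -cardsX.
set A := setX _ _; pose child (p : vertex * 'I_d) := vertex_of d h (rcons (vword p.1) p.2).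
have word_child p : p \in A -> is_word d h (rcons (vword p.1) p.2).
  case: p => u a; rewrite !inE => /andP[/eqP size_u /andP[_ lt_a]].
  by rewrite is_word_rcons vword_is_word size_u lt_t_h.
rewrite -(card_in_imset (f := child)); last first.
  move=> [u a] [u' a'] /word_child + /word_child + /(congr1 vword).
  rewrite /child /= => /vertex_ofK -> /vertex_ofK -> /rcons_inj[/vword_inj -> /val_inj ->] //.
apply: eq_card => v; rewrite inE; apply/idP/imsetP => [/andP[/eqP size_v lo_v]|].
  have [u Eu] := is_word_vword (is_word_take t (vword_is_word v)).
  have v_nil : vword v != [::] by rewrite -size_eq0 size_v.
  have Ev : vword v = rcons (vword u) (last 0 (vword v)).
    by rewrite Eu -[in LHS](rcons_parent_word v_nil) /parent_word size_v.
  have size_u : size (vword u) = t by move: size_v; rewrite Ev size_rcons => -[].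
  have := vword_is_word v; rewrite {1}Ev is_word_rcons size_u => /and3P[_ _ lt_last].
  have lt_last_d : last 0 (vword v) < d by exact: leq_trans lt_last le_bound_d.
  exists (u, Ordinal lt_last_d); first by rewrite !inE size_u eqxx /= lo_v lt_last.
  by apply: vword_inj; rewrite /child /= vertex_ofK -?Ev ?vword_is_word.
move=> [[u a] ua_in ->]; have := word_child _ ua_in; move: ua_in.
rewrite !inE /child /= => /andP[/eqP size_u /andP[lo_a _]] /vertex_ofK ->.
by rewrite size_rcons size_u last_rcons eqxx.
Qed.

Lemma card_level_succ t : t < h -> #|level t.+1| = #|level t| * letter_bound d t.
Proof.
move=> lt_t_h; rewrite -[letter_bound d t]subn0 -card_level_succ_ge //.
by apply: eq_card => v; rewrite !inE leq0n andbT.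
Qed.

Lemma card_level t : t <= h -> #|level t| = if t == 0 then 1 else d * d.-1 ^ t.-1.
Proof.
elim: t => [|t IHt] lt_t_h; first exact: card_level0.
rewrite card_level_succ // IHt ?(ltnW lt_t_h) // /letter_bound.
by case: t {IHt lt_t_h} => [|t] /=; rewrite ?mul1n ?muln1 // expnSr mulnA.
Qed.

Definition gens_upto t := [set v : vertex |
  [&& size (vword v) <= t, odd (size (vword v)) == odd t & nonzero_tip (vword v)]].

Definition tip_level t := [set v : vertex | (size (vword v) == t) && (1 <= last 0 (vword v))].

Lemma card_gens_uptoSS t : #|gens_upto t.+2| = #|gens_upto t| + #|tip_level t.+2|.
Proof.
rewrite -(cardsID [set v : vertex | size (vword v) <= t]); congr (_ + _); apply: eq_card => v.
  rewrite !inE /= negbK -andbA andbC.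
  by case: (leqP (size (vword v)) t) => le_t; rewrite ?andbF // (leqW (leqW le_t)) !andbT.
rewrite !inE /= negbK /nonzero_tip -size_eq0 lt0n -ltnNge.
set s := size (vword v); have [-> | ne_s] := eqVneq s t.+2.
  by rewrite /= negbK eqxx !ltnS leqnSn leqnn.
case: (ltnP t s) => [lt_t_s|]; rewrite ?andbF //.
case: (leqP s t.+2) => [le_s|]; rewrite ?andbF //=.
have -> : s = t.+1 by lia.
by rewrite /=; case: (odd t).
Qed.

Lemma card_gens_upto t : t <= h -> #|gens_upto t| = d.-1 ^ t.
Proof.
have [n] := ubnP t; elim: n t => // n IHn [|[|t]] lt_t le_t_h.
- rewrite expn0 -card_level0; apply: eq_card => v; rewrite !inE leqn0 /nonzero_tip -size_eq0.
  by case: (size (vword v)).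
- have -> : gens_upto 1 = tip_level 1.
    apply/setP => v; rewrite !inE /nonzero_tip -size_eq0 lt0n.
    by case: (size (vword v)) => [|[|m]].
  by rewrite card_level_succ_ge // card_level0 mul1n subn1.
rewrite card_gens_uptoSS IHn ?card_level_succ_ge ?card_level; try lia.
have [e ->] : exists e, d = e.+2 by exists d.-2; lia.
by rewrite /letter_bound /= subn1 /= !expnS; ring.
Qed.

Lemma card_gen_vertex : #|[set v : vertex | gen_vertex v]| = d.-1 ^ h.
Proof.
rewrite -card_gens_upto //; apply: eq_card => v.
by rewrite !inE /gen_vertex vword_size.
Qed.

End Counting.

Unset Implicit Arguments.

Theorem theorem2p1 (d h : nat) :
  (3 <= d)%N -> (1 <= h)%N -> sandpile_rank_is d h ((d - 1) ^ h)%N.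
Proof.
move=> d_gt2 _; have d_gt1 : (1 < d)%N := ltnW d_gt2.
rewrite subn1 -(card_gen_vertex h d_gt1); split; first exact: gen_vertex_generate.
exact: card_gen_vertex_le.
Qed.
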